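(* Let $a^*(\lambda)$ be the density on $[0,9]$ of the push-forward of the normalized Haar measure on $\{|x_1|=|x_2|=1\}$ under $P_2=(1+x_1+x_2)(1+x_1^{-1}+x_2^{-1})$, and let $c(t)=\int_0^1\frac{a^*(\lambda)}{1-t\lambda}d\lambda=\sum_{m\ge0}c_mt^m$. Let $\widetilde{\mathcal L}_2(\lambda,\theta)=9\theta^2-\lambda(10\theta^2+10\theta+3)+\lambda^2(\theta+1)^2$. Then $c_0=\frac14$ and \[ \Bigl[\widetilde{\mathcal L}_2\Bigl(\frac1t,-\theta_t-1\Bigr)c(t)\Bigr]_-=-\frac{6}{\pi^2\,t}. \]
   Context: $\theta_t=t\frac{d}{dt}$. For an operator $\mathcal M(\lambda,\theta)=\sum d_{ij}\lambda^i\theta^j$, $\mathcal M(\frac1t,-\theta_t-1)$ denotes $\sum d_{ij}t^{-i}(-\theta_t-1)^j$. For a Laurent series $\sum_na_nt^n$, $[\sum_na_nt^n]_-=\sum_{n<0}a_nt^n$. *)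

From HB Require Import structures.
From mathcomp Require Import all_boot all_order all_algebra.
From mathcomp Require Import all_classical all_reals all_analysis.
From mathcomp Require Import complex.
Set Implicit Arguments. Unset Strict Implicit. Unset Printing Implicit Defensive.
Import Order.TTheory GRing.Theory Num.Theory.
Local Open Scope classical_set_scope.
Local Open Scope ring_scope.

Section Defs.
Variable R : realType.

Definition circ (s : R) : R[i] :=
  (cos (2 * pi * s) +i* sin (2 * pi * s))%C.

(** P_2(x1,x2) = (1+x1+x2)(1+x1^{-1}+x2^{-1}) evaluated on the torus
    |x1| = |x2| = 1, parametrized by angles s = (s1,s2) in [0,1]^2.
    The value is real; we take its real part. *)
Definition P2_torus (s : R * R) : R :=
  let x1 := circ s.1 in let x2 := circ s.2 in
  complex.Re ((1 + x1 + x2) * (1 + x1^-1 + x2^-1)).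

(** Normalized Haar measure on the torus {|x1|=|x2|=1}, transported to the
    angle square [0,1]^2 (product Lebesgue measure restricted to [0,1]^2). *)
Definition haar_torus : set (R * R) -> \bar R :=
  fun A => ((@lebesgue_measure R) \x (@lebesgue_measure R))%E
             (A `&` (`[0%R, 1%R]%classic `*` `[0%R, 1%R]%classic)).

(** The push-forward of the Haar measure under P_2: a measure on R
    (supported on [0,9]) whose density is a^*(lambda). *)
Definition P2_distribution : set R -> \bar R := pushforward haar_torus P2_torus.

(** c_m = \int_0^1 lambda^m a^*(lambda) d lambda, i.e. the m-th Taylor coefficient
    of c(t) = \int_0^1 a^*(lambda)/(1 - t lambda) d lambda. *)
Definition c_coef (m : nat) : R :=
  fine (\int[P2_distribution]_(l in `[0%R, 1%R]%classic) (l ^+ m)%:E)%E.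

(** Formal Laurent series in t with real coefficients: coefficient maps int -> R
    (a_n is the coefficient of t^n). *)
Definition laurent := int -> R.

Definition series_of (a : nat -> R) : laurent :=
  fun n => match n with Posz m => a m | Negz _ => 0 end.

(** theta_t = t d/dt : t^n |-> n t^n. *)
Definition theta_t (f : laurent) : laurent := fun n => n%:~R * f n.

Definition mul_tinv (i : nat) (f : laurent) : laurent := fun n => f (n + i%:Z).

Definition mthetam1_pow (j : nat) (f : laurent) : laurent :=
  iter j (fun g : laurent => fun n => - theta_t g n - g n) f.

(** An operator M(lambda, theta) = sum d_ij lambda^i theta^j, given as a list of
    triples (i, j, d_ij); [op_subst M f] is M(1/t, -theta_t - 1) f
    = sum d_ij t^{-i} (-theta_t - 1)^j f. *)
Definition op_subst (M : seq (nat * nat * R)) (f : laurent) : laurent :=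
  fun n => \sum_(e <- M) e.2 * mul_tinv e.1.1 (mthetam1_pow e.1.2 f) n.

(** L~_2(lambda,theta) = 9 theta^2 - lambda (10 theta^2 + 10 theta + 3)
                         + lambda^2 (theta + 1)^2, expanded into monomials. *)
Definition L2tilde : seq (nat * nat * R) :=
  [:: (0%N, 2%N, 9); (1%N, 2%N, -10); (1%N, 1%N, -10); (1%N, 0%N, -3);
      (2%N, 2%N, 1); (2%N, 1%N, 2); (2%N, 0%N, 1)].

Definition neg_part (f : laurent) : laurent :=
  fun n => if (n < 0)%R then f n else 0.

End Defs.

From HB Require Import structures.
From mathcomp Require Import all_boot all_order all_algebra.
From mathcomp Require Import all_classical all_reals all_analysis.
From mathcomp Require Import complex measurable_realfun.
From mathcomp Require Import ring lra.
Import Order.TTheory GRing.Theory Num.Theory.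
Import numFieldNormedType.Exports.
Set Implicit Arguments. Unset Strict Implicit. Unset Printing Implicit Defensive.
Local Open Scope ring_scope.

(** In angles s = (s1, s2) of the torus,
      P_2 = |1 + x1 + x2|^2 = 3 + 2 cos 2pi s1 + 2 cos 2pi s2 + 2 cos 2pi (s1 - s2)
          = 1 + 8 cos (pi s1) cos (pi s2) cos (pi (s1 - s2)),
    and the sign of the last product shows that, off the null line s1 = 1/2,
    the part {P_2 <= 1} of the unit square is the union of the triangles
    {s1 < 1/2, 1/2 <= s2 <= s1 + 1/2} and {s1 > 1/2, s1 - 1/2 <= s2 <= 1/2}.
    Integrating 1 and P_2 over them by Fubini and elementary primitives gives
    c_0 = 1/4 and c_1 = 3/4 - 6/pi^2.  On coefficients L~_2(1/t, -theta_t - 1)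
    is the three-term recurrence
      (L f)_n = 9 (n+1)^2 f_n - (10 (n+2)^2 - 10 (n+2) + 3) f_(n+1) + (n+2)^2 f_(n+2),
    so on a power series its principal part is c_1 - 3 c_0 at t^-1 and zero elsewhere. *)

Section cos_pi.
Variable R : realType.
Implicit Types t : R.

Lemma cos_pi_gt0 t : -(1/2) < t < 1/2 -> 0 < cos (pi * t).
Proof.
move=> /andP[t_gt t_lt]; have pi_gt0 := pi_gt0 R.
by apply: cos_gt0_pihalf; apply/andP; split; nra.
Qed.

Lemma cos_pi_ge0 t : -(1/2) <= t <= 1/2 -> 0 <= cos (pi * t).
Proof.
move=> /andP[t_ge t_le]; have pi_gt0 := pi_gt0 R.
by apply: cos_ge0_pihalf; apply/andP; split; nra.
Qed.

Lemma cos_pi_lt0 t : 1/2 < t <= 1 -> cos (pi * t) < 0.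
Proof.
move=> /andP[t_gt t_le]; rewrite (_ : pi * t = pi * (t - 1) + pi); last by ring.
by rewrite cosDpi oppr_lt0 cos_pi_gt0 //; apply/andP; split; lra.
Qed.

Lemma cos_pi_le0 t : 1/2 <= t <= 1 -> cos (pi * t) <= 0.
Proof.
move=> /andP[t_ge t_le]; rewrite (_ : pi * t = pi * (t - 1) + pi); last by ring.
by rewrite cosDpi oppr_le0 cos_pi_ge0 //; apply/andP; split; lra.
Qed.

End cos_pi.

Section torus.
Variable R : realType.
Implicit Types (s : R * R) (t x y : R).

Lemma P2_torus_sqr s : P2_torus s =
  (1 + cos (2 * pi * s.1) + cos (2 * pi * s.2)) ^+ 2 +
  (sin (2 * pi * s.1) + sin (2 * pi * s.2)) ^+ 2.
Proof.
case: s => s1 s2; rewrite /P2_torus /circ /=.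
set a := cos _; set b := sin _; set c := cos _; set d := sin _.
have -> : a ^+ 2 + b ^+ 2 = 1 by rewrite cos2Dsin2.
have -> : c ^+ 2 + d ^+ 2 = 1 by rewrite cos2Dsin2.
rewrite !divr1; ring.
Qed.

Lemma P2_torus_ge0 s : 0 <= P2_torus s.
Proof. by rewrite P2_torus_sqr addr_ge0 // sqr_ge0. Qed.

Lemma P2_torus_cos s : P2_torus s = 3 + 2 * cos (2 * pi * s.1)
  + 2 * cos (2 * pi * s.2) + 2 * cos (2 * pi * s.1 - 2 * pi * s.2).
Proof.
rewrite P2_torus_sqr cosB.
have := cos2Dsin2 (2 * pi * s.1); have := cos2Dsin2 (2 * pi * s.2).
move: (cos _) (sin _) (cos _) (sin _) => a b c d h1 h2; nra.
Qed.

Lemma P2_torus_cos_prod s :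
  P2_torus s = 1 + 8 * cos (pi * s.1) * cos (pi * s.2) * cos (pi * (s.1 - s.2)).
Proof.
have dbl t : 2 * pi * t = (pi * t) *+ 2 by rewrite mulr2n; ring.
rewrite P2_torus_sqr !dbl !sin_mulr2n !cos_mulr2n mulrBr cosB.
have := cos2Dsin2 (pi * s.1); have := cos2Dsin2 (pi * s.2).
move: (cos _) (sin _) (cos _) (sin _) => a b c d h1 h2; nra.
Qed.

Lemma P2_torus_le1 s : (P2_torus s <= 1) =
  (cos (pi * s.1) * cos (pi * s.2) * cos (pi * (s.1 - s.2)) <= 0).
Proof. by rewrite P2_torus_cos_prod -!mulrA gerDl pmulr_rle0. Qed.

Lemma P2_torus_sym s : P2_torus (1 - s.1, 1 - s.2) = P2_torus s.
Proof.
have cos_refl t : cos (2 * pi * (1 - t)) = cos (2 * pi * t) :> R.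
  rewrite (_ : 2 * pi * (1 - t) = - (2 * pi * t) + pi *+ 2) ?cosD2pi ?cosN //.
  by rewrite mulr2n; ring.
rewrite !P2_torus_cos /= !cos_refl.
by rewrite (_ : _ - _ = - (2 * pi * s.1 - 2 * pi * s.2)) ?cosN //; ring.
Qed.

Lemma P2_torus_le1_lt_half x y : 0 <= x < 1/2 -> 0 <= y <= 1 ->
  (P2_torus (x, y) <= 1) = (1/2 <= y <= x + 1/2).
Proof.
move=> /andP[x_ge0 x_lt] /andP[y_ge0 y_le1]; rewrite P2_torus_le1 /=.
have a_gt0 : 0 < cos (pi * x) by rewrite cos_pi_gt0 //; apply/andP; split; lra.
have [y_lt|y_ge] := ltP y (1/2).
  have b_gt0 : 0 < cos (pi * y) by rewrite cos_pi_gt0 //; apply/andP; split; lra.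
  have c_gt0 : 0 < cos (pi * (x - y)) by rewrite cos_pi_gt0 //; apply/andP; split; lra.
  by rewrite leNgt !mulr_gt0.
have b_le0 : cos (pi * y) <= 0 by rewrite cos_pi_le0 //; apply/andP; split.
have [y_le|y_gt] := leP y (x + 1/2).
  have c_ge0 : 0 <= cos (pi * (x - y)) by rewrite cos_pi_ge0 //; apply/andP; split; lra.
  by rewrite mulrAC mulr_ge0_le0 // mulr_ge0 // ltW.
have b_lt0 : cos (pi * y) < 0 by rewrite cos_pi_lt0 //; apply/andP; split; lra.
have c_lt0 : cos (pi * (x - y)) < 0.
  by rewrite -cosN -mulrN opprB cos_pi_lt0 //; apply/andP; split; lra.
have bc_gt0 : 0 < cos (pi * y) * cos (pi * (x - y)) by rewrite nmulr_rgt0.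
by rewrite leNgt -mulrA mulr_gt0.
Qed.

Lemma P2_torus_le1_gt_half x y : 1/2 < x <= 1 -> 0 <= y <= 1 ->
  (P2_torus (x, y) <= 1) = (x - 1/2 <= y <= 1/2).
Proof.
move=> /andP[x_gt x_le1] /andP[y_ge0 y_le1].
rewrite -P2_torus_sym /= P2_torus_le1_lt_half; last 2 first.
- by apply/andP; split; lra.
- by apply/andP; split; lra.
by apply/andP/andP => -[h1 h2]; split; lra.
Qed.

End torus.

Section calculus.
Variable R : realType.
Implicit Types (f F : R -> R) (a b : R).
Local Notation mu := (@lebesgue_measure R).

Lemma derivable_continuous f : (forall x : R, derivable f x 1) -> continuous f.
Proof. by move=> df x; apply/differentiable_continuous/derivable1_diffP. Qed.

Lemma integral_itv_primitive f F {ba bb : bool} a b : a <= b ->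
  continuous f -> (forall x : R, is_derive x 1 F (f x)) ->
  (\int[mu]_(x in [set` Interval (BSide ba a) (BSide bb b)]) (f x)%:E
    = (F b - F a)%:E)%E.
Proof.
move=> ab cf dF.
have cF : continuous F by apply: derivable_continuous => x; exact: ex_derive.
have closed_itv : (\int[mu]_(x in `[a, b]) (f x)%:E = (F b - F a)%:E)%E.
  case: (ltgtP a b) ab => // [a_lt_b _ | <- _]; last first.
    by rewrite set_itv1 integral_set1 subrr.
  rewrite (@continuous_FTC2 _ f F) ?EFinB //.
  - by apply: continuous_subspaceT => x; exact: cf.
  - split; first by move=> x _; exact: ex_derive.
      exact: cvg_at_right_filter (cF a).
    exact: cvg_at_left_filter (cF b).
  - by move=> x _; rewrite derive1E; exact: derive_val.
case: ba; case: bb;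
  rewrite ?integral_itv_bndo_bndc ?integral_itv_obnd_cbnd ?closed_itv //.
all: by apply/measurable_EFinP; apply: measurable_funTS; exact: continuous_measurable_fun.
Qed.

Lemma integral_itv1 a b : a <= b ->
  (\int[mu]_(y in `[a, b]) (1 : R)%:E = (b - a)%:E)%E.
Proof.
by move=> ab; apply: (integral_itv_primitive (f := fun=> 1) (F := id)) => //; exact: cst_continuous.
Qed.

End calculus.

Lemma ge0_integral_mrestr d (T : measurableType d) (R : realType)
  (m : {measure set T -> \bar R}) (S : set T) (mS : measurable S) (D : set T)
  (f : T -> \bar R) : measurable D -> measurable_fun D f ->
  (forall x, D x -> (0 <= f x)%E) ->
  (\int[mrestr m mS]_(x in D) f x = \int[m]_(x in D `&` S) f x)%E.
Proof.
move=> mD mf f0.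
have DSE := setUIDK D S.
transitivity (\int[mrestr m mS]_(x in (D `&` S) `|` (D `\` S)) f x)%E.
  by rewrite DSE.
rewrite ge0_integral_setU ?DSE //; first last.
- by apply/disj_setPS => x [[_ ?] [_ ?]].
- exact: measurableD.
- exact: measurableI.
rewrite (@null_set_integral _ _ _ (mrestr m mS) (D `\` S)) ?adde0 //; first last.
- by change (m ((D `\` S) `&` S)%classic = 0)%E; rewrite setDKI measure0.
- by apply: (measurable_funS mD) mf => x [].
- exact: measurableD.
apply: eq_measure_integral => A mA AS.
by change (m (A `&` S)%classic = m A); rewrite setIidl // => x /AS [].
Qed.

Lemma pi_neq0 (R : realType) : pi != 0 :> R.
Proof. by rewrite gt_eqF // pi_gt0. Qed.

Ltac field_pi := match goal with |- context [@pi ?R] =>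
  have := @pi_neq0 R; move: (@pi R) => p p_neq0; by field end.

Section moments.
Variable R : realType.
Local Notation mu := (@lebesgue_measure R).
Local Notation P2 := (@P2_torus R).
Implicit Types (m : nat) (x y a b : R).

Lemma measurable_P2_torus : measurable_fun setT P2.
Proof.
have cont_trig (a : R) : continuous (fun t : R => cos (a * t)) /\
    continuous (fun t : R => sin (a * t)).
  by split; apply: derivable_continuous => t; apply: ex_derive.
have meas_fst (g : R -> R) : continuous g ->
    measurable_fun setT (fun z : R * R => g z.1).
  move=> cg; apply: measurableT_comp; first exact: continuous_measurable_fun.
  exact: measurable_fst.
have meas_snd (g : R -> R) : continuous g ->
    measurable_fun setT (fun z : R * R => g z.2).
  move=> cg; apply: measurableT_comp; first exact: continuous_measurable_fun.
  exact: measurable_snd.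
rewrite (_ : P2 = fun s => (1 + cos (2 * pi * s.1) + cos (2 * pi * s.2)) ^+ 2 +
    (sin (2 * pi * s.1) + sin (2 * pi * s.2)) ^+ 2); last first.
  by apply/funext => s; rewrite P2_torus_sqr.
apply: measurable_funD; apply: measurable_funX.
- apply: measurable_funD; last exact: meas_snd (cont_trig _).1.
  by apply: measurable_funD; [exact: measurable_cst | exact: meas_fst (cont_trig _).1].
- by apply: measurable_funD; [exact: meas_fst (cont_trig _).2 | exact: meas_snd (cont_trig _).2].
Qed.

Lemma measurable_P2_torus_preimage (i : interval R) : measurable (P2 @^-1` [set` i]).
Proof.
by rewrite -[X in measurable X]setTI; apply: measurable_P2_torus => //; exact: measurable_itv.
Qed.

Definition unit_square : set (R * R) := (`[0, 1] `*` `[0, 1])%classic.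

Definition P2_sublevel : set (R * R) := (P2 @^-1` `[0, 1] `&` unit_square)%classic.

Lemma measurable_P2_sublevel : measurable P2_sublevel.
Proof.
apply: measurableI; first exact: measurable_P2_torus_preimage.
by apply: measurableX; exact: measurable_itv.
Qed.

Lemma c_coef_sublevel m : c_coef R m =
  fine (\int[(mu \x mu)%E]_(z in P2_sublevel) (P2 z ^+ m)%:E)%E.
Proof.
have msq : measurable unit_square by apply: measurableX; exact: measurable_itv.
rewrite /c_coef /P2_distribution.
have -> : @haar_torus R = mrestr (mu \x mu)%E msq by [].
have mP2 : @measurable_fun _ _ (measurableTypeR R * measurableTypeR R)%type R
    setT P2 := measurable_P2_torus.
rewrite (@ge0_integral_pushforward _ _ (measurableTypeR R * measurableTypeR R)%type
  R R P2 mP2 (mrestr (mu \x mu)%E msq) `[0, 1]%classic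
  (fun l => (l ^+ m)%:E)); first last.
- by move=> l; rewrite inE /= in_itv /= => /andP[l_ge0 _]; rewrite lee_fin exprn_ge0.
- by apply/measurable_EFinP; apply: measurable_funTS; exact: measurable_funX.
- exact: measurable_itv.
rewrite ge0_integral_mrestr //.
- exact: measurable_P2_torus_preimage.
- apply/measurable_EFinP; apply: measurable_funTS; apply: measurable_funX.
  exact: measurable_P2_torus.
- by move=> z; rewrite /= in_itv /= => /andP[z_ge0 _]; rewrite lee_fin exprn_ge0.
Qed.

Definition moment_integrand m : R * R -> \bar R :=
  (fun z => (P2 z ^+ m)%:E) \_ P2_sublevel.

Definition moment_section m x := (\int[mu]_y moment_integrand m (x, y))%E.

Lemma measurable_moment_integrand m :
  @measurable_fun _ _ (measurableTypeR R * measurableTypeR R)%type _ setT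
    (moment_integrand m).
Proof.
apply/(measurable_restrictT _ measurable_P2_sublevel).
apply/measurable_EFinP; apply: measurable_funTS; apply: measurable_funX.
exact: measurable_P2_torus.
Qed.

Lemma moment_integrand_ge0 m z : (0 <= moment_integrand m z)%E.
Proof.
rewrite /moment_integrand /patch; case: ifPn => // /set_mem [+ _].
by rewrite /= in_itv /= => /andP[z_ge0 _]; rewrite lee_fin exprn_ge0.
Qed.

Lemma c_coef_iterated m : c_coef R m = fine (\int[mu]_x moment_section m x)%E.
Proof.
rewrite c_coef_sublevel integral_mkcond.
by rewrite (fubini_tonelli1 _ (measurable_moment_integrand m) (moment_integrand_ge0 m)).
Qed.

Lemma moment_sectionE m x : moment_section m x =
  (\int[mu]_(y in [set y : R | P2_sublevel (x, y)]) (P2 (x, y) ^+ m)%:E)%E.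
Proof. by rewrite [RHS]integral_mkcond. Qed.

Lemma P2_sublevel_section_out x : ~ (0 <= x <= 1) ->
  ([set y : R | P2_sublevel (x, y)] = set0)%classic.
Proof.
by move=> x_out; apply/seteqP; split => y //= -[_ [/=]]; rewrite in_itv.
Qed.

Lemma P2_sublevel_section_lt_half x : 0 <= x < 1/2 ->
  ([set y : R | P2_sublevel (x, y)] = `[1/2, x + 1/2])%classic.
Proof.
move=> x_in; have /andP[x_ge0 x_lt] := x_in.
apply/seteqP; split => y /=; rewrite !in_itv /=.
  move=> [/andP[_ le1] [_ /= y01]].
  by rewrite -P2_torus_le1_lt_half.
move=> y_in; have /andP[y_ge y_le] := y_in.
split; first by rewrite /= in_itv /= P2_torus_ge0 P2_torus_le1_lt_half //; apply/andP; split; lra.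
by split; rewrite /= in_itv /=; apply/andP; split; lra.
Qed.

Lemma P2_sublevel_section_gt_half x : 1/2 < x <= 1 ->
  ([set y : R | P2_sublevel (x, y)] = `[x - 1/2, 1/2])%classic.
Proof.
move=> x_in; have /andP[x_gt x_le1] := x_in.
apply/seteqP; split => y /=; rewrite !in_itv /=.
  move=> [/andP[_ le1] [_ /= y01]].
  by rewrite -P2_torus_le1_gt_half.
move=> y_in; have /andP[y_ge y_le] := y_in.
split; first by rewrite /= in_itv /= P2_torus_ge0 P2_torus_le1_gt_half //; apply/andP; split; lra.
by split; rewrite /= in_itv /=; apply/andP; split; lra.
Qed.

Lemma measurable_moment_section m : measurable_fun setT (moment_section m).
Proof.
exact: measurable_fun_fubini_tonelli_F (measurable_moment_integrand m)
  (moment_integrand_ge0 m).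
Qed.

Lemma moment_section_ge0 m x : (0 <= moment_section m x)%E.
Proof. by apply: integral_ge0 => y _; exact: moment_integrand_ge0. Qed.

Lemma integral_moment_section m : (\int[mu]_x moment_section m x =
  \int[mu]_(x in `[0%R, (1/2)%R[) moment_section m x +
  \int[mu]_(x in `](1/2)%R, 1%R]) moment_section m x)%E.
Proof.
have mF := measurable_moment_section m.
transitivity (\int[mu]_(x in `[0%R, 1%R]) moment_section m x)%E.
  rewrite [RHS]integral_mkcond; apply: eq_integral => x _.
  rewrite /patch; case: ifPn => // /negP x_out.
  rewrite moment_sectionE P2_sublevel_section_out ?integral_set0 // => x01.
  by apply: x_out; apply/mem_set; rewrite /= in_itv.
have split_half : (`[0, 1] `\ (1/2) = `[0, 1/2[ `|` `]1/2, 1] :> set R)%classic.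
  apply/seteqP; split => x /=; rewrite !in_itv /=.
    move=> [/andP[x_ge0 x_le1] x_neq].
    by case: (ltgtP x (1/2)) x_neq => // hx _; [left | right]; apply/andP; split.
  by move=> [|] /andP[h1 h2]; split; try (apply/andP; split); lra.
rewrite -(@integral_setD1 _ _ (1/2)); first last.
- exact: measurable_funTS.
- by apply: measurableD; [exact: measurable_itv | exact: measurable_set1].
rewrite split_half ge0_integral_setU //.
- exact: measurable_funTS.
- by move=> x _; exact: moment_section_ge0.
- apply/disj_setPS => x [] /=; rewrite !in_itv /= => /andP[_ x_lt] /andP[x_gt _].
  by have := lt_trans x_lt x_gt; rewrite ltxx.
Qed.

Lemma moment_section_lt_half m x : 0 <= x < 1/2 -> moment_section m x =
  (\int[mu]_(y in `[(1/2)%R, (x + 1/2)%R]) (P2 (x, y) ^+ m)%:E)%E.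
Proof. by move=> x_in; rewrite moment_sectionE P2_sublevel_section_lt_half. Qed.

Lemma moment_section_gt_half m x : 1/2 < x <= 1 -> moment_section m x =
  (\int[mu]_(y in `[(x - 1/2)%R, (1/2)%R]) (P2 (x, y) ^+ m)%:E)%E.
Proof. by move=> x_in; rewrite moment_sectionE P2_sublevel_section_gt_half. Qed.

Lemma moment_section0_lt_half x : 0 <= x < 1/2 -> moment_section 0 x = x%:E.
Proof.
move=> x_in; rewrite moment_section_lt_half //.
under eq_integral do rewrite expr0.
rewrite integral_itv1; first by congr (_%:E); lra.
by case/andP: x_in => x_ge0 _; lra.
Qed.

Lemma moment_section0_gt_half x : 1/2 < x <= 1 -> moment_section 0 x = (1 - x)%:E.
Proof.
move=> x_in; rewrite moment_section_gt_half //.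
under eq_integral do rewrite expr0.
rewrite integral_itv1; first by congr (_%:E); lra.
by case/andP: x_in => _ x_le1; lra.
Qed.

Lemma c_coef_primitives m (g1 G1 g2 G2 : R -> R) :
  (forall x, 0 <= x < 1/2 -> moment_section m x = (g1 x)%:E) ->
  (forall x, 1/2 < x <= 1 -> moment_section m x = (g2 x)%:E) ->
  continuous g1 -> continuous g2 ->
  (forall x, is_derive x 1 G1 (g1 x)) -> (forall x, is_derive x 1 G2 (g2 x)) ->
  c_coef R m = G1 (1/2) - G1 0 + (G2 1 - G2 (1/2)).
Proof.
move=> sec1 sec2 cg1 cg2 dG1 dG2.
have half_ge0 : 0 <= 1/2 :> R by lra.
have half_le1 : 1/2 <= 1 :> R by lra.
rewrite c_coef_iterated integral_moment_section.
rewrite (@eq_integral _ _ _ mu `[0%R, (1/2)%R[ (fun x => (g1 x)%:E)); last first.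
  by move=> x; rewrite inE /= in_itv /=; exact: sec1.
rewrite (@eq_integral _ _ _ mu `](1/2)%R, 1%R] (fun x => (g2 x)%:E)); last first.
  by move=> x; rewrite inE /= in_itv /=; exact: sec2.
by rewrite (integral_itv_primitive half_ge0 cg1 dG1)
  (integral_itv_primitive half_le1 cg2 dG2).
Qed.

Lemma c_coef0 : c_coef R 0 = 1/4.
Proof.
have dG1 x : is_derive x 1 (fun x => x ^+ 2 / 2) x.
  by apply: is_derive_eq; rewrite /GRing.scale /=; field.
have dG2 x : is_derive x 1 (fun x => x - x ^+ 2 / 2) (1 - x).
  by apply: is_derive_eq; rewrite /GRing.scale /=; field.
rewrite (c_coef_primitives moment_section0_lt_half moment_section0_gt_half
  _ _ dG1 dG2); first by field.
all: by apply: derivable_continuous => x; apply: ex_derive.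
Qed.

Definition P2_primitive x y :=
  (3 + 2 * cos (2 * pi * x)) * y + (sin (2 * pi * y) - sin (2 * pi * x - 2 * pi * y)) / pi.

Lemma integral_P2_torus_dy x a b : a <= b ->
  (\int[mu]_(y in `[a, b]) (P2 (x, y))%:E
    = (P2_primitive x b - P2_primitive x a)%:E)%E.
Proof.
move=> ab; under eq_integral do rewrite P2_torus_cos /=.
apply: integral_itv_primitive => // [|y].
  by apply: derivable_continuous => y; apply: ex_derive.
apply: is_derive_eq; rewrite /GRing.scale /=.
field_pi.
Qed.

Lemma moment_section1_lt_half x : 0 <= x < 1/2 -> moment_section 1 x =
  (x * (3 + 2 * cos (2 * pi * x)) - 2 / pi * sin (2 * pi * x))%:E.
Proof.
move=> x_in; rewrite moment_section_lt_half //.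
under eq_integral do rewrite expr1.
rewrite integral_P2_torus_dy; last by case/andP: x_in => x_ge0 _; lra.
rewrite /P2_primitive (_ : 2 * pi * (x + 1/2) = 2 * pi * x + pi); last by field.
rewrite (_ : 2 * pi * x - (2 * pi * x + pi) = - pi); last by ring.
rewrite (_ : 2 * pi * (1/2) = pi); last by field.
rewrite sinDpi sinN sinpi sinB sinpi cospi.
by congr (_%:E); field_pi.
Qed.

Lemma moment_section1_gt_half x : 1/2 < x <= 1 -> moment_section 1 x =
  ((1 - x) * (3 + 2 * cos (2 * pi * x)) + 2 / pi * sin (2 * pi * x))%:E.
Proof.
move=> x_in; rewrite moment_section_gt_half //.
under eq_integral do rewrite expr1.
rewrite integral_P2_torus_dy; last by case/andP: x_in => _ x_le1; lra.
rewrite /P2_primitive (_ : 2 * pi * (x - 1/2) = 2 * pi * x - pi); last by field.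
rewrite (_ : 2 * pi * x - (2 * pi * x - pi) = pi); last by ring.
rewrite (_ : 2 * pi * (1/2) = pi); last by field.
rewrite sinB sinpi cospi.
by congr (_%:E); field_pi.
Qed.

Lemma c_coef1 : c_coef R 1 = 3/4 - 6 / pi ^+ 2.
Proof.
have dG1 x : is_derive x 1 (fun x => 3/2 * x ^+ 2 + x * sin (2 * pi * x) / pi
    + 3 / (2 * pi ^+ 2) * cos (2 * pi * x))
    (x * (3 + 2 * cos (2 * pi * x)) - 2 / pi * sin (2 * pi * x)).
  by apply: is_derive_eq; rewrite /GRing.scale /=; field_pi.
have dG2 x : is_derive x 1 (fun x => 3 * x - 3/2 * x ^+ 2
    + (1 - x) * sin (2 * pi * x) / pi - 3 / (2 * pi ^+ 2) * cos (2 * pi * x))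
    ((1 - x) * (3 + 2 * cos (2 * pi * x)) + 2 / pi * sin (2 * pi * x)).
  by apply: is_derive_eq; rewrite /GRing.scale /=; field_pi.
rewrite (c_coef_primitives moment_section1_lt_half moment_section1_gt_half
  _ _ dG1 dG2); last 2 first.
- by apply: derivable_continuous => x; apply: ex_derive.
- by apply: derivable_continuous => x; apply: ex_derive.
have two_pi_half : 2 * pi * (1/2) = pi :> R by field.
have two_pi : 2 * pi * 1 = pi *+ 2 :> R by rewrite mulr1 mulr2n; ring.
rewrite two_pi_half two_pi !mulr0 sinpi cospi sin2pi cos2pi sin0 cos0.
field_pi.
Qed.

End moments.

Section operator.
Variable R : realType.
Implicit Types (f : laurent R) (n : int).

Lemma mthetam1_powE j f n : mthetam1_pow j f n = (- n%:~R - 1) ^+ j * f n.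
Proof.
elim: j => [|j IHj]; first by rewrite mul1r.
by rewrite /mthetam1_pow iterS -/(mthetam1_pow j f) /theta_t IHj exprS; ring.
Qed.

Lemma op_subst_L2tilde f n : op_subst (L2tilde R) f n =
  9 * (n + 1)%:~R ^+ 2 * f n
  - (10 * (n + 2)%:~R ^+ 2 - 10 * (n + 2)%:~R + 3) * f (n + 1)
  + (n + 2)%:~R ^+ 2 * f (n + 2).
Proof.
rewrite /op_subst /L2tilde !big_cons big_nil /mul_tinv !mthetam1_powE /=.
by rewrite !addr0 !intrD (_ : Posz 1 = 1) // (_ : Posz 2 = 2) //; ring.
Qed.

Lemma neg_part_L2tilde_series (a : nat -> R) :
  neg_part (op_subst (L2tilde R) (series_of a))
  = (fun n : int => if n == -1 then a 1%N - 3 * a 0%N else 0).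
Proof.
apply/funext => -[k|[|[|k]]]; rewrite /neg_part op_subst_L2tilde //=.
- by rewrite subnn addnK !intrD; ring.
- by rewrite subnn !intrD; ring.
- by ring.
Qed.

End operator.

Theorem lemma5p3 (R : realType) :
  c_coef R 0 = 1 / 4 /\
  neg_part (op_subst (L2tilde R) (series_of (c_coef R)))
  = (fun n : int => if n == -1 then - 6 / (pi ^+ 2) else 0).
Proof.
split; first exact: c_coef0.
rewrite neg_part_L2tilde_series c_coef0 c_coef1.
by apply/funext => n; case: ifP => // _; field_pi.
Qed.
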